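(* Consider the control-affine system $\dot x = f(x) + g(x)u$ with $f:\mathbb{R}^{n_x}\to\mathbb{R}^{n_x}$, $g:\mathbb{R}^{n_x}\to\mathbb{R}^{n_x\times n_u}$ Lipschitz and $\mathcal{C}^{m-1}$, control set $\mathcal{U}\subset\mathbb{R}^{n_u}$ compact, and a $\mathcal{C}^m$ function $h:\mathbb{R}^{n_x}\to\mathbb{R}$ of relative degree $m$. Let $\Gamma_1,\dots,\Gamma_m$ be class $\mathcal{K}$ functions with $\Gamma_i \in \mathcal{C}^{m-i}$, and define $\psi_0 = h$, $\psi_i = \dot\psi_{i-1} + \Gamma_i(\psi_{i-1})$ for $i = 1,\dots,m-1$. Let $a(x) = (L_g L_f^{m-1} h(x))^\top$ and $b(x) = -L_f^m h(x) - \sum_{i=0}^{m-1} L_f^i(\Gamma_{m-i}\circ\psi_{m-i-1})(x)$, let $u_n$ be a nominal controller, and let $\pi(x)$ be a minimizer of $\|u - u_n(x)\|_2^2$ over $u \in \mathcal{U}$ subject to $a(x)^\top u \ge b(x)$. Assume this problem is feasible and $\pi(x) \notin \partial\mathcal{U}$. If the system controlled by $\pi$ is at an equilibrium $(x_e,u_e)$, i.e. $u_e = \pi(x_e)$ and $0 = f(x_e) + g(x_e)u_e$, then either (i) $u_n(x_e) = u_e$, or (ii) $h(x_e) = 0$.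
   Context: $h$ has relative degree $m$ means $L_g L_f^{i} h \equiv 0$ for $i = 0,\dots,m-2$ (so that the $m$-th time derivative of $h$ along the system is the first to depend on $u$, namely $\dot\psi_{m-1} + \Gamma_m(\psi_{m-1}) = L_f^m h + L_g L_f^{m-1}h\, u + \sum_{i=0}^{m-1} L_f^i(\Gamma_{m-i}\circ\psi_{m-i-1})$). Derivatives $\dot\psi_i$ are along the system trajectories. A class $\mathcal{K}$ function is continuous, strictly increasing, with value $0$ at $0$. $\partial\mathcal{U}$ denotes the boundary of $\mathcal{U}$. *)

From HB Require Import structures.
From mathcomp Require Import all_boot all_order all_algebra.
From mathcomp Require Import all_classical all_reals all_analysis.
Set Implicit Arguments. Unset Strict Implicit. Unset Printing Implicit Defensive.
Import Order.TTheory GRing.Theory Num.Theory.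
Import numFieldNormedType.Exports.
Local Open Scope classical_set_scope.
Local Open Scope ring_scope.

Section Defs.
Variable R : realType.

(* C^k in the Frechet sense: C^0 = continuous; C^{k+1} = differentiable
   everywhere and every directional derivative x |-> dF(x) v is C^k
   (equivalent, in finite dimension, to dF being C^k). *)
Fixpoint Ck (V W : normedModType R) (k : nat) (F : V -> W) : Prop :=
  match k with
  | 0 => continuous F
  | k.+1 => (forall x, differentiable F x) /\
            forall v : V, Ck k (fun x => 'd F x v)
  end.

(* class K function on the whole real line (extended class K) *)
Definition classK (G : R -> R) : Prop :=
  continuous G /\ {mono G : x y / x < y} /\ G 0 = 0.

Definition bdry (T : topologicalType) (A : set T) : set T :=
  closure A `\` A°.

Variables nx nu : nat.
Local Notation X := 'cV[R]_nx.
Local Notation U := 'cV[R]_nu.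

Definition Lie (f : X -> X) (h : X -> R) : X -> R := fun x => 'd h x (f x).

Definition iterLie (f : X -> X) (k : nat) (h : X -> R) : X -> R :=
  iter k (Lie f) h.

Definition LieG (g : X -> 'M[R]_(nx, nu)) (h : X -> R) : X -> 'rV[R]_nu :=
  fun x => \row_j 'd h x (col j (g x)).

(* psi_0 = h, psi_i = \dot psi_{i-1} + Gam_i (psi_{i-1});  by relative degree
   \dot psi_{i-1} = L_f psi_{i-1} for i <= m-1 *)
Fixpoint psi (f : X -> X) (Gam : nat -> R -> R) (h : X -> R) (i : nat) : X -> R :=
  match i with
  | 0 => h
  | i.+1 => fun x => Lie f (psi f Gam h i) x + Gam i.+1 (psi f Gam h i x)
  end.

Definition acoef (f : X -> X) (g : X -> 'M[R]_(nx, nu)) (h : X -> R) (m : nat)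
  (x : X) : U := (LieG g (iterLie f m.-1 h) x)^T.

Definition bcoef (f : X -> X) (Gam : nat -> R -> R) (h : X -> R) (m : nat)
  (x : X) : R :=
  - iterLie f m h x
  - \sum_(i < m) iterLie f i (fun y => Gam (m - i)%N (psi f Gam h (m - i - 1)%N y)) x.

Definition dotc (a u : U) : R := \sum_(j < nu) a j ord0 * u j ord0.

Definition sqnorm2 (u : U) : R := \sum_(j < nu) (u j ord0) ^+ 2.

End Defs.

From HB Require Import structures.
From mathcomp Require Import all_boot all_order all_algebra.
From mathcomp Require Import all_classical all_reals all_analysis.
From mathcomp Require Import zify ring lra.
Import Order.TTheory GRing.Theory Num.Theory.
Import numFieldNormedType.Exports.
Local Open Scope classical_set_scope.
Local Open Scope ring_scope.
Set Implicit Arguments. Unset Strict Implicit.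

(* At an equilibrium f(xe) = - g(xe) ue, hence L_f phi (xe) = - L_g phi (xe) ue
   for every phi; in particular L_f phi vanishes at xe wherever L_g phi does.
   By the relative degree assumption, L_g L_f^j annihilates psi_k and the
   barrier terms Gam_(m-i) o psi_(m-i-1) for all the relevant j, because the
   class of functions annihilated by L_g, L_g L_f, ..., L_g L_f^r is closed
   under sums, products and composition with smooth scalar maps.  So the slack
   a(xe)^T ue - b(xe) of the QP equals Gam_m (psi_(m-1) xe).
   If the slack is positive, the constraint is inactive at ue, which is also
   interior to U: ue minimizes the distance to un(xe) on a neighbourhood of ue,
   so ue = un(xe).  Otherwise Gam_m (psi_(m-1) xe) = 0, and since
   psi_(k+1) xe = Gam_(k+1) (psi_k xe) at the equilibrium and class K functions
   only vanish at 0, we get psi_(m-1) xe = ... = psi_0 xe = h xe = 0. *)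

Section Ck_closure.
Variable R : realType.
Implicit Types V W : normedModType R.

Lemma CkW V W k (F : V -> W) : Ck k.+1 F -> Ck k F.
Proof.
elim: k F => [|k IH] F [dF dFC] /=; first by move=> x; apply: differentiable_continuous.
by split=> // v; apply: IH.
Qed.

Lemma Ck_le V W k1 k2 (F : V -> W) : (k1 <= k2)%N -> Ck k2 F -> Ck k1 F.
Proof. by move=> /subnK <-; elim: (k2 - k1)%N => //= d IH /CkW. Qed.

Lemma Ck_cst V W k (c : W) : Ck k (fun _ : V => c).
Proof.
elim: k c => [|k IH] c /=; first exact: cst_continuous.
split=> [x|v]; first exact: differentiable_cst.
have -> : (fun x => 'd (fun _ : V => c) x v) = (fun _ => 0).
  by apply/funext => x; rewrite (diff_cst c x).
exact: IH.
Qed.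

Lemma diffD_dir V W (F G : V -> W) x v :
  differentiable F x -> differentiable G x ->
  'd (fun y => F y + G y) x v = 'd F x v + 'd G x v.
Proof. by move=> dF dG; rewrite (diffD dF dG). Qed.

Lemma diffM_dir V (F G : V -> R) x v :
  differentiable F x -> differentiable G x ->
  'd (fun y => F y * G y) x v = F x * 'd G x v + G x * 'd F x v.
Proof. by move=> dF dG; rewrite (diffM dF dG). Qed.

Lemma diff_comp_dir V (H : R -> R) (F : V -> R) x v :
  differentiable F x -> differentiable H (F x) ->
  'd (fun y => H (F y)) x v = 'd F x v * 'd H (F x) 1.
Proof.
move=> dF dH; rewrite (diff_comp dF dH) /=.
by rewrite -[in LHS](mulr1 ('d F x v)) -[_ * 1]/('d F x v *: 1) linearZ.
Qed.

Lemma diff_entry V m n (F : V -> 'M[R]_(m, n)) i j x v :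
  differentiable F x -> 'd (fun y => F y i j) x v = 'd F x v i j.
Proof.
move=> dF; have dFij : differentiable (fun y => F y i j) x.
  exact: (differentiable_comp dF (differentiable_coord _ i j)).
by rewrite -!deriveE // derive_mx ?mxE //; apply: diff_derivable.
Qed.

Lemma CkD V W k (F G : V -> W) :
  Ck k F -> Ck k G -> Ck k (fun x => F x + G x).
Proof.
elim: k F G => [|k IH] F G /=.
  by move=> cF cG x; exact: continuousD (cF x) (cG x).
move=> [dF dFC] [dG dGC]; split=> [x|v]; first exact: differentiableD (dF x) (dG x).
have -> : (fun x => 'd (fun y => F y + G y) x v) = (fun x => 'd F x v + 'd G x v).
  by apply/funext => x; rewrite diffD_dir.
exact: IH.
Qed.

Lemma Ck_sum V W k I (r : seq I) (F : I -> V -> W) :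
  (forall i, Ck k (F i)) -> Ck k (fun x => \sum_(i <- r) F i x).
Proof.
move=> CF; elim: r => [|i r IH].
  by under eq_fun do rewrite big_nil; apply: Ck_cst.
by under eq_fun do rewrite big_cons; apply: CkD.
Qed.

Lemma CkM V k (F G : V -> R) : Ck k F -> Ck k G -> Ck k (fun x => F x * G x).
Proof.
elim: k F G => [|k IH] F G /=.
  by move=> cF cG x; exact: continuousM (cF x) (cG x).
move=> CF CG; have [dF dFC] := CF; have [dG dGC] := CG.
split=> [x|v]; first exact: differentiableM (dF x) (dG x).
have -> : (fun x => 'd (fun y => F y * G y) x v) =
          (fun x => F x * 'd G x v + G x * 'd F x v).
  by apply/funext => x; rewrite diffM_dir.
by apply: CkD; apply: IH => //; apply: CkW.
Qed.

Lemma Ck_comp V k (H : R -> R) (F : V -> R) :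
  Ck k H -> Ck k F -> Ck k (fun x => H (F x)).
Proof.
elim: k H F => [|k IH] H F /=.
  by move=> cH cF x; exact: continuous_comp (cF x) (cH (F x)).
move=> CH CF; have [dH dHC] := CH; have [dF dFC] := CF.
split=> [x|v]; first exact: differentiable_comp (dF x) (dH (F x)).
have -> : (fun x => 'd (fun y => H (F y)) x v) = (fun x => 'd F x v * 'd H (F x) 1).
  by apply/funext => x; rewrite diff_comp_dir.
apply: CkM; first exact: dFC.
by apply: (IH (fun y => 'd H y 1)); [apply: dHC | apply: CkW].
Qed.

Lemma Ck_entry V k m n (F : V -> 'M[R]_(m, n)) i j :
  Ck k F -> Ck k (fun x => F x i j).
Proof.
elim: k F => [|k IH] F /=.
  by move=> cF x; exact: continuous_comp (cF x) (@coord_continuous R m n i j (F x)).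
move=> [dF dFC]; split=> [x|v].
  exact: (differentiable_comp (dF x) (differentiable_coord _ i j)).
have -> : (fun x => 'd (fun y => F y i j) x v) = (fun x => 'd F x v i j).
  by apply/funext => x; rewrite diff_entry.
exact: IH.
Qed.

End Ck_closure.

Section Lie_derivatives.
Variables (R : realType) (nx nu : nat).
Variables (f : 'cV[R]_nx -> 'cV[R]_nx) (g : 'cV[R]_nx -> 'M[R]_(nx, nu)).
Implicit Types phi : 'cV[R]_nx -> R.

Lemma Lie_sum_coord phi x :
  Lie f phi x = \sum_(i < nx) f x i ord0 * 'd phi x (delta_mx i ord0).
Proof.
rewrite /Lie {1}(matrix_sum_delta (f x)) linear_sum.
by apply: eq_bigr => i _; rewrite big_ord1 linearZ.
Qed.

Lemma Ck_Lie k phi : Ck k f -> Ck k.+1 phi -> Ck k (Lie f phi).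
Proof.
move=> Cf [_ dphiC]; rewrite (funext (Lie_sum_coord phi)).
by apply: Ck_sum => i; apply: CkM; [exact: Ck_entry | exact: dphiC].
Qed.

Variables (F G : 'cV[R]_nx -> R) (H : R -> R).
Hypotheses (dF : forall x, differentiable F x) (dG : forall x, differentiable G x).
Hypothesis dH : forall y, differentiable H y.

Lemma LieD : Lie f (fun x => F x + G x) = (fun x => Lie f F x + Lie f G x).
Proof. by apply/funext => x; rewrite /Lie diffD_dir. Qed.

Lemma LieM :
  Lie f (fun x => F x * G x) = (fun x => F x * Lie f G x + G x * Lie f F x).
Proof. by apply/funext => x; rewrite /Lie diffM_dir. Qed.

Lemma Lie_comp : Lie f (fun x => H (F x)) = (fun x => Lie f F x * 'd H (F x) 1).
Proof. by apply/funext => x; rewrite /Lie diff_comp_dir. Qed.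

Lemma LieGD x : LieG g (fun y => F y + G y) x = LieG g F x + LieG g G x.
Proof. by apply/rowP => j; rewrite !mxE diffD_dir. Qed.

Lemma LieGM x : LieG g (fun y => F y * G y) x = F x *: LieG g G x + G x *: LieG g F x.
Proof. by apply/rowP => j; rewrite !mxE diffM_dir. Qed.

Lemma LieG_comp x : LieG g (fun y => H (F y)) x = 'd H (F x) 1 *: LieG g F x.
Proof. by apply/rowP => j; rewrite !mxE diff_comp_dir // mulrC. Qed.

End Lie_derivatives.

Section Input_free.
Variables (R : realType) (nx nu : nat).
Variables (f : 'cV[R]_nx -> 'cV[R]_nx) (g : 'cV[R]_nx -> 'M[R]_(nx, nu)).
Implicit Types F G phi : 'cV[R]_nx -> R.

Fixpoint input_free r phi : Prop :=
  [/\ Ck r.+1 phi, forall x, LieG g phi x = 0 &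
      if r is r'.+1 then input_free r' (Lie f phi) else True].

Lemma input_free_Ck r phi : input_free r phi -> Ck r.+1 phi.
Proof. by case: r => [|r] []. Qed.

Lemma input_free_LieG r phi : input_free r phi -> forall x, LieG g phi x = 0.
Proof. by case: r => [|r] []. Qed.

Lemma input_free_differentiable r phi :
  input_free r phi -> forall x, differentiable phi x.
Proof. by move=> /input_free_Ck []. Qed.

Lemma input_freeW r phi : input_free r.+1 phi -> input_free r phi.
Proof.
elim: r phi => [|r IH] phi [Cphi Lphi Pphi].
  by split=> //; apply: CkW.
by split=> //; [apply: CkW | apply: IH].
Qed.

Lemma input_freeD r F G :
  input_free r F -> input_free r G -> input_free r (fun x => F x + G x).
Proof.
elim: r F G => [|r IH] F G PF PG; have dF := input_free_differentiable PF;
  have dG := input_free_differentiable PG; case: PF PG => CF LF PF [CG LG PG].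
all: split; [exact: CkD | by move=> x; rewrite LieGD // LF LG addr0 |].
- by [].
- by rewrite LieD //; apply: IH.
Qed.

Lemma input_freeM r F G :
  input_free r F -> input_free r G -> input_free r (fun x => F x * G x).
Proof.
elim: r F G => [|r IH] F G PF PG; have dF := input_free_differentiable PF;
  have dG := input_free_differentiable PG; case: PF PG => CF LF PF [CG LG PG].
all: split; [exact: CkM | by move=> x; rewrite LieGM // LF LG !scaler0 addr0 |].
- by [].
- by rewrite LieM //; apply: input_freeD; apply: IH => //; apply: input_freeW.
Qed.

Lemma input_free_comp r (H : R -> R) F :
  Ck r.+1 H -> input_free r F -> input_free r (fun x => H (F x)).
Proof.
elim: r H F => [|r IH] H F CH PF; have dF := input_free_differentiable PF;
  have [dH dHC] := CH; have [CF LF PLF] := PF.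
all: split; [exact: Ck_comp | by move=> x; rewrite LieG_comp // LF scaler0 |].
- by [].
- rewrite Lie_comp //; apply: input_freeM => //.
  by apply: (IH (fun y => 'd H y 1)); [exact: dHC | exact: input_freeW].
Qed.

Lemma input_free_iterLie r j phi :
  input_free (r + j) phi -> input_free r (iterLie f j phi).
Proof.
elim: j phi => [|j IH] phi; first by rewrite addn0.
by rewrite addnS => -[_ _ /IH]; rewrite /iterLie iterSr.
Qed.

Lemma input_free_LieG_iterLie r j phi :
  input_free r phi -> (j <= r)%N -> forall x, LieG g (iterLie f j phi) x = 0.
Proof.
move=> Pphi /subnK rE; rewrite -rE in Pphi.
exact/input_free_LieG/input_free_iterLie/Pphi.
Qed.

Lemma input_free_intro r phi : Ck r f -> Ck r.+1 phi ->
  (forall j, (j <= r)%N -> forall x, LieG g (iterLie f j phi) x = 0) ->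
  input_free r phi.
Proof.
elim: r phi => [|r IH] phi Cf Cphi L.
  by split=> //; apply: (L 0%N).
split=> //; first exact: (L 0%N).
apply: IH; [exact: CkW | exact: Ck_Lie | move=> j jr x].
by have := L j.+1 jr x; rewrite /iterLie iterSr.
Qed.

End Input_free.

Section Projection.
Variables (R : realType) (n : nat).
Implicit Types (a u v w : 'cV[R]_n) (t : R).

Lemma dotcD a u v : dotc a (u + v) = dotc a u + dotc a v.
Proof. by rewrite /dotc -big_split; apply: eq_bigr => j _; rewrite mxE mulrDr. Qed.

Lemma dotcZ a t v : dotc a (t *: v) = t * dotc a v.
Proof. by rewrite /dotc mulr_sumr; apply: eq_bigr => j _; rewrite mxE mulrCA. Qed.

Lemma sqnorm2Z t v : sqnorm2 (t *: v) = t ^+ 2 * sqnorm2 v.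
Proof. by rewrite /sqnorm2 mulr_sumr; apply: eq_bigr => j _; rewrite mxE exprMn. Qed.

Lemma sqnorm2_ge0 v : 0 <= sqnorm2 v.
Proof. by apply: sumr_ge0 => j _; apply: sqr_ge0. Qed.

Lemma sqnorm2_eq0 v : sqnorm2 v = 0 -> v = 0.
Proof.
move=> /psumr_eq0P v0; apply/matrixP => i j; rewrite (ord1 j) mxE.
by apply/eqP; rewrite -sqrf_eq0; apply/eqP/v0 => // k _; apply: sqr_ge0.
Qed.

Lemma segment_inactive_near (U : set 'cV[R]_n) a b u d :
  U° u -> b < dotc a u ->
  \forall t \near 0, U (u + t *: d) /\ b < dotc a (u + t *: d).
Proof.
move=> Uu bu; have to_u : (fun t => u + t *: d) @ 0 --> u.
  rewrite -[X in _ --> X]addr0 -(scale0r d).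
  by apply: cvgD; [exact: cvg_cst | exact: (@scalel_continuous _ _ d 0)].
have to_au : (fun t => dotc a u + t * dotc a d) @ 0 --> dotc a u.
  rewrite -[X in _ --> X]addr0 -[X in _ + X](mul0r (dotc a d)).
  by apply: cvgD; [exact: cvg_cst | apply: cvgM; [exact: cvg_id | exact: cvg_cst]].
near=> t; split; first by near: t; exact: to_u.
by rewrite dotcD dotcZ; near: t; exact: cvgr_gt to_au _ bu.
Unshelve. all: by end_near.
Qed.

Lemma inactive_interior_minimizer (U : set 'cV[R]_n) a b u w :
  U° u -> b < dotc a u ->
  (forall v, U v -> b <= dotc a v -> sqnorm2 (u - w) <= sqnorm2 (v - w)) ->
  w = u.
Proof.
move=> Uu bu umin.
have [t [/andP[t0 t1] [Ut bt]]] : exists t,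
    0 < t < 1 /\ U (u + t *: (w - u)) /\ b < dotc a (u + t *: (w - u)).
  apply: (@filter_ex _ 0^'+); near=> t; split; first (apply/andP; split).
  - by near: t; exact: nbhs_right_gt.
  - by near: t; exact: nbhs_right_lt.
  - by near: t; apply: cvg_within; exact: segment_inactive_near.
have := umin _ Ut (ltW bt).
have -> : u + t *: (w - u) - w = (1 - t) *: (u - w).
  by apply/matrixP => i j; rewrite !mxE; ring.
rewrite sqnorm2Z; set S := sqnorm2 (u - w) => S_le.
have S0 : S * (t * (2 - t)) <= 0.
  have E : (1 - t) ^+ 2 * S = S - S * (t * (2 - t)) by ring.
  lra.
rewrite pmulr_lle0 in S0; last by apply: mulr_gt0 => //; lra.
apply/esym/subr0_eq/sqnorm2_eq0/le_anti.
by rewrite S0 sqnorm2_ge0.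
Unshelve. all: by end_near.
Qed.

End Projection.

Lemma classK_eq0 (R : realType) (G : R -> R) y : classK G -> G y = 0 -> y = 0.
Proof.
move=> [_ [Gmono G0]] Gy.
by case: (ltgtP y 0) => //; rewrite -Gmono Gy G0 ltxx.
Qed.

Lemma mulmx_sum_col (R : comPzRingType) m n (A : 'M[R]_(m, n)) (u : 'cV[R]_n) :
  A *m u = \sum_j u j 0 *: col j A.
Proof.
apply/colP => i; rewrite !mxE summxE; apply: eq_bigr => j _.
by rewrite !mxE mulrC.
Qed.

Section Equilibrium.
Variables (R : realType) (nx nu : nat).
Variables (f : 'cV[R]_nx -> 'cV[R]_nx) (g : 'cV[R]_nx -> 'M[R]_(nx, nu)).
Variables (xe : 'cV[R]_nx) (ue : 'cV[R]_nu).
Hypothesis equilibrium : f xe + g xe *m ue = 0.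

Lemma Lie_equilibrium phi : Lie f phi xe = - dotc (LieG g phi xe)^T ue.
Proof.
rewrite /Lie.
have -> : f xe = - (g xe *m ue) by apply/eqP; rewrite -addr_eq0 equilibrium.
rewrite mulmx_sum_col linearN linear_sum /dotc; congr (- _).
by apply: eq_bigr => j _; rewrite linearZ !mxE mulrC.
Qed.

Lemma Lie_equilibrium_eq0 phi : LieG g phi xe = 0 -> Lie f phi xe = 0.
Proof.
move=> L0; rewrite Lie_equilibrium L0 /dotc big1 ?oppr0 // => j _.
by rewrite !mxE mul0r.
Qed.

End Equilibrium.

Section Barrier.
Variables (R : realType) (nx nu m : nat).
Variables (f : 'cV[R]_nx -> 'cV[R]_nx) (g : 'cV[R]_nx -> 'M[R]_(nx, nu)).
Variables (h : 'cV[R]_nx -> R) (Gam : nat -> R -> R).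
Hypotheses (Cf : Ck m.-1 f) (Ch : Ck m h).
Hypothesis reldeg :
  forall i, (i.+2 <= m)%N -> forall x, LieG g (iterLie f i h) x = 0.
Hypothesis CGam : forall i, (1 <= i <= m)%N -> Ck (m - i) (Gam i).

Lemma input_free_psi k :
  (k.+2 <= m)%N -> input_free f g (m - k.+2) (psi f Gam h k).
Proof.
elim: k => [|k IH] km.
  apply: input_free_intro => [||j jm].
  - by apply: (Ck_le _ Cf); lia.
  - by apply: (Ck_le _ Ch); lia.
  - by apply: reldeg; lia.
have := IH (ltnW km); have -> : (m - k.+2 = (m - k.+3).+1)%N by lia.
move=> Ppsi; have [_ _ PLpsi] := Ppsi.
apply: input_freeD => //; apply: input_free_comp (input_freeW Ppsi).
by apply: (Ck_le _ (CGam _)); lia.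
Qed.

Lemma LieG_psi k : (k.+2 <= m)%N -> forall x, LieG g (psi f Gam h k) x = 0.
Proof. by move/input_free_psi/input_free_LieG. Qed.

Lemma LieG_iterLie_barrier i : (i.+2 <= m)%N -> forall x,
  LieG g (iterLie f i (fun y => Gam (m - i.+1) (psi f Gam h (m - i.+1 - 1) y))) x = 0.
Proof.
move=> im x; have e1 : (m - i.+1 - 1 = m - i.+2)%N by lia.
have e2 : (m - (m - i.+2).+2 = i)%N by lia.
rewrite e1; apply: (input_free_LieG_iterLie (r := i)) => //.
apply: input_free_comp; first by apply: (Ck_le _ (CGam _)); lia.
by rewrite -[X in input_free _ _ X]e2; apply: input_free_psi; lia.
Qed.

Hypothesis Gam_classK : forall i, (1 <= i <= m)%N -> classK (Gam i).
Variables (xe : 'cV[R]_nx) (ue : 'cV[R]_nu).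
Hypothesis equilibrium : f xe + g xe *m ue = 0.

Lemma slack_equilibrium : (0 < m)%N ->
  dotc (acoef f g h m xe) ue - bcoef f Gam h m xe = Gam m (psi f Gam h m.-1 xe).
Proof.
move=> m0; have iterLie_m : iterLie f m h = Lie f (iterLie f m.-1 h).
  by rewrite -[in LHS](prednK m0).
rewrite /acoef /bcoef iterLie_m (Lie_equilibrium equilibrium) opprK.
rewrite opprD opprK addrA subrr add0r (bigD1 (Ordinal m0)) //= subn0 subn1.
rewrite big1 ?addr0 // => -[[|i] im] //= _.
by apply: (Lie_equilibrium_eq0 equilibrium); apply: LieG_iterLie_barrier.
Qed.

Lemma psi_equilibrium_eq0 k : (k < m)%N -> psi f Gam h k xe = 0 -> h xe = 0.
Proof.
elim: k => [//|k IH] km; have Kk : classK (Gam k.+1) by apply: Gam_classK; lia.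
rewrite /= (Lie_equilibrium_eq0 equilibrium) ?LieG_psi // add0r.
by move=> /(classK_eq0 Kk); apply: IH; apply: ltnW.
Qed.

Lemma tight_equilibrium_h_eq0 : (0 < m)%N ->
  dotc (acoef f g h m xe) ue = bcoef f Gam h m xe -> h xe = 0.
Proof.
move=> m0 tight; have Km : classK (Gam m) by apply: Gam_classK; lia.
apply: (@psi_equilibrium_eq0 m.-1); first by rewrite prednK.
by apply: (classK_eq0 Km); rewrite -slack_equilibrium // tight subrr.
Qed.

End Barrier.

Lemma interior_not_bdry (T : topologicalType) (A : set T) x :
  A x -> ~ bdry A x -> A° x.
Proof.
move=> Ax notbd; apply: contrapT => notint.
by apply: notbd; split => //; apply: subset_closure.
Qed.

Unset Implicit Arguments.

Theorem proposition2 (R : realType) (nx nu m : nat)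
  (f : 'cV[R]_nx -> 'cV[R]_nx) (g : 'cV[R]_nx -> 'M[R]_(nx, nu))
  (h : 'cV[R]_nx -> R) (Uset : set 'cV[R]_nu)
  (Gam : nat -> R -> R) (un pi : 'cV[R]_nx -> 'cV[R]_nu)
  (xe : 'cV[R]_nx) (ue : 'cV[R]_nu) :
  (0 < m)%N ->
  lipschitz f -> lipschitz g ->
  Ck m.-1 f -> Ck m.-1 g ->
  compact Uset ->
  Ck m h ->
  (* relative degree m *)
  (forall i : nat, (i.+2 <= m)%N -> forall x, LieG g (iterLie f i h) x = 0) ->
  (forall i : nat, (1 <= i <= m)%N -> classK (Gam i) /\ Ck (m - i) (Gam i)) ->
  (* feasibility of the QP *)
  (forall x, exists u, Uset u /\ dotc (acoef f g h m x) u >= bcoef f Gam h m x) ->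
  (* pi(x) is a minimizer of the QP *)
  (forall x, Uset (pi x) /\ dotc (acoef f g h m x) (pi x) >= bcoef f Gam h m x /\
     forall u, Uset u -> dotc (acoef f g h m x) u >= bcoef f Gam h m x ->
       sqnorm2 (pi x - un x) <= sqnorm2 (u - un x)) ->
  (forall x, ~ bdry Uset (pi x)) ->
  (* equilibrium of the closed loop *)
  ue = pi xe -> f xe + g xe *m ue = 0 ->
  un xe = ue \/ h xe = 0.
Proof.
(* Lipschitz continuity, compactness of U and feasibility only make the closed
   loop and pi well defined; the argument itself does not use them. *)
move=> m0 _ _ Cf _ _ Ch reldeg Gam_ok _ pi_opt pi_bdry -> equilibrium.
have CGam i im := (Gam_ok i im).2; have KGam i im := (Gam_ok i im).1.
have [Upi [feasible pi_min]] := pi_opt xe.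
move: feasible; rewrite le_eqVlt => /orP[/eqP tight | inactive].
  right; apply: (tight_equilibrium_h_eq0 Cf Ch reldeg CGam KGam equilibrium m0).
  by rewrite tight.
left; apply: (inactive_interior_minimizer _ inactive pi_min).
exact: interior_not_bdry (pi_bdry xe).
Qed.
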